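(* Let $(\lambda,\mu,\nu,b,c)$ be a compatible tower with $\nu=(\nu_1,\dots,\nu_r)$. Let \[ \lambda'=\Big\langle\bigcup_{i=1}^r(\nu_i+b_i)\Big\rangle,\qquad \mu'=\Big\langle\bigcup_{i=1}^r(\nu_i+c_i)\Big\rangle . \] Then $(\lambda',\mu',\nu,b,c)$ is a compatible scaffolded tower, and $(\lambda',\mu',\nu,b,c)\le(\lambda,\mu,\nu,b,c)$.
   Context: $\mathbb{N}^3$ carries the componentwise partial order. A $3$-dimensional Young diagram is a finite down-closed subset of $\mathbb{N}^3$. A tower is a triple $(\lambda,\nu,b)$ with $\lambda$ a $3$-dimensional Young diagram, $\nu=(\nu_1,\dots,\nu_r)$ with $\nu_i=\{(0,0,z): z\in\mathbb{N}, 0\le z<n_i\}$ ($n_i\ge1$), $b_i\in\mathbb{Z}^3$, such that the $\nu_i+b_i$ are pairwise disjoint subsets of $\lambda$ and, for all $w\in\mathbb{N}^3$ and $v_i\in\nu_i$ with $v_i+b_i+w\in\lambda$, $v_i+w\in\nu_i$. A compatible tower $(\lambda,\mu,\nu,b,c)$ is one where $(\lambda,\nu,b)$ and $(\mu,\nu,c)$ are towers. For $T\subseteq\mathbb{N}^3$, its order ideal is $\langle T\rangle=\{p\in\mathbb{N}^3: p\le t \text{ for some } t\in T\}$. A tower $(\lambda,\nu,b)$ is scaffolded if $\lambda=\langle\bigcup_i(\nu_i+b_i)\rangle$; a compatible tower is scaffolded if both $(\lambda,\nu,b)$ and $(\mu,\nu,c)$ are. Partial order on compatible towers: $(\lambda,\mu,\nu,b,c)\le(\lambda',\mu',\nu',b',c')$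 if $\lambda\subseteq\lambda'$, $\mu\subseteq\mu'$, writing $\nu=(\nu_i)_{i\in I}$ and $\nu'=(\nu'_j)_{j\in J}$ there is an injection $\iota\colon I\to J$ with $\nu_i\subseteq\nu'_{\iota(i)}$, and $|\lambda\cap\mu|-|\nu|\le|\lambda'\cap\mu'|-|\nu'|$, where $|\nu|=\sum_i|\nu_i|$. *)

From HB Require Import structures.
From mathcomp Require Import all_boot all_order all_algebra.
From mathcomp Require Import finmap.
Set Implicit Arguments. Unset Strict Implicit. Unset Printing Implicit Defensive.
Import Order.TTheory GRing.Theory Num.Theory.
Local Open Scope fset_scope.

Definition pt := (nat * nat * nat)%type.
Definition vec := (int * int * int)%type.

Definition toZ (p : pt) : vec := (Posz p.1.1, Posz p.1.2, Posz p.2).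
Definition addv (u v : vec) : vec := ((u.1.1 + v.1.1)%R, (u.1.2 + v.1.2)%R, (u.2 + v.2)%R).
Definition addp (p q : pt) : pt := (p.1.1 + q.1.1, p.1.2 + q.1.2, p.2 + q.2)%N.

Definition lep (p q : pt) : bool :=
  [&& (p.1.1 <= q.1.1)%N, (p.1.2 <= q.1.2)%N & (p.2 <= q.2)%N].
Definition lev (u v : vec) : bool :=
  [&& (u.1.1 <= v.1.1)%R, (u.1.2 <= v.1.2)%R & (u.2 <= v.2)%R].

Definition inZ (lam : {fset pt}) (v : vec) : Prop :=
  exists2 q, q \in lam & toZ q = v.

Definition young (lam : {fset pt}) : Prop :=
  forall p q : pt, q \in lam -> lep p q -> p \in lam.

Definition col (n : nat) : {fset pt} := [fset ((0%N, 0%N), z) | z in iota 0 n].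

Definition nu_size (r : nat) (n : 'I_r -> nat) : nat := (\sum_(i < r) #|` col (n i)|)%N.

(* tower (lam, nu, b), with nu_i = col (n i) *)
Definition tower (lam : {fset pt}) (r : nat) (n : 'I_r -> nat) (b : 'I_r -> vec) : Prop :=
  [/\ young lam,
      (forall i, 0 < n i)%N,
      (forall i v, v \in col (n i) -> inZ lam (addv (toZ v) (b i))),
      (forall i j, i <> j -> forall v v', v \in col (n i) -> v' \in col (n j) ->
          addv (toZ v) (b i) <> addv (toZ v') (b j)) &
      (forall i (w v : pt), v \in col (n i) ->
          inZ lam (addv (addv (toZ v) (b i)) (toZ w)) -> addp v w \in col (n i))].

Definition compatible_tower (lam mu : {fset pt}) (r : nat) (n : 'I_r -> nat)
    (b c : 'I_r -> vec) : Prop :=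
  tower lam n b /\ tower mu n c.

Definition order_ideal (T : vec -> Prop) (p : pt) : Prop :=
  exists t, T t /\ lev (toZ p) t.

Definition shifted_union (r : nat) (n : 'I_r -> nat) (b : 'I_r -> vec) (v : vec) : Prop :=
  exists i : 'I_r, exists2 u, u \in col (n i) & v = addv (toZ u) (b i).

Definition scaffolded (lam : {fset pt}) (r : nat) (n : 'I_r -> nat) (b : 'I_r -> vec) : Prop :=
  tower lam n b /\ forall p, p \in lam <-> order_ideal (shifted_union n b) p.

Definition scaffolded_ct (lam mu : {fset pt}) (r : nat) (n : 'I_r -> nat)
    (b c : 'I_r -> vec) : Prop :=
  scaffolded lam n b /\ scaffolded mu n c.

(* partial order on compatible towers (b, c play no role) *)
Definition ct_le (lam mu : {fset pt}) (r : nat) (n : 'I_r -> nat) (b c : 'I_r -> vec)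
    (lam' mu' : {fset pt}) (r' : nat) (n' : 'I_r' -> nat) (b' c' : 'I_r' -> vec) : Prop :=
  [/\ lam `<=` lam', mu `<=` mu',
      (exists iota : 'I_r -> 'I_r', injective iota /\
          forall i, col (n i) `<=` col (n' (iota i))) &
      ((#|` lam `&` mu|%:Z - (nu_size n)%:Z) <= (#|` lam' `&` mu'|%:Z - (nu_size n')%:Z))%R].

(* The order ideal generated by the shifted columns [nu_i + b_i] lies inside
   [lam], since [lam] contains these columns and is down-closed; hence it is a
   finite Young diagram, obtained by filtering [lam].  A down-closed subset of
   [lam] still containing the columns inherits the tower conditions (the last
   one only becomes weaker when the diagram shrinks), and shrinking [lam] and
   [mu] while keeping [nu] can only decrease [|lam `&` mu| - |nu|]. *)
From Pilot Require Import Defs.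
From HB Require Import structures.
From mathcomp Require Import all_boot all_order all_algebra.
From mathcomp Require Import finmap.
Set Implicit Arguments. Unset Strict Implicit. Unset Printing Implicit Defensive.
Import Order.TTheory GRing.Theory Num.Theory.
Local Open Scope fset_scope.

Lemma lev_refl (u : vec) : lev u u.
Proof. by rewrite /lev !lexx. Qed.

Lemma lev_trans (u v w : vec) : lev u v -> lev v w -> lev u w.
Proof.
case: u v w => [[u1 u2] u3] [[v1 v2] v3] [[w1 w2] w3].
rewrite /lev /= => /and3P[le1 le2 le3] /and3P[le1' le2' le3'].
by rewrite (le_trans le1 le1') (le_trans le2 le2') (le_trans le3 le3').
Qed.

Lemma lev_toZ (p q : pt) : lev (toZ p) (toZ q) = lep p q.
Proof. by rewrite /lev /lep /= !lez_nat. Qed.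

Lemma inZS (lam' lam : {fset pt}) (v : vec) :
  lam' `<=` lam -> inZ lam' v -> inZ lam v.
Proof. by move=> /fsubsetP sub [q /sub q_lam <-]; exists q. Qed.

(* [Defs.col] and [Defs.addv] are qualified: [col] and [addv] also name the
   matrix column and the subspace sum of [all_algebra]. *)
Lemma tower_subset (lam lam' : {fset pt}) (r : nat) (n : 'I_r -> nat)
    (b : 'I_r -> vec) :
  tower lam n b -> young lam' -> lam' `<=` lam ->
  (forall i v, v \in Defs.col (n i) -> inZ lam' (Defs.addv (toZ v) (b i))) ->
  tower lam' n b.
Proof.
case=> _ n_gt0 _ disj stable young' sub cols; split=> // i w v v_col inZ_lam'.
exact: stable i w v v_col (inZS sub inZ_lam').
Qed.

Lemma ct_le_subset (lam' mu' lam mu : {fset pt}) (r : nat) (n : 'I_r -> nat)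
    (b c : 'I_r -> vec) :
  lam' `<=` lam -> mu' `<=` mu -> ct_le lam' mu' n b c lam mu n b c.
Proof.
move=> sub_lam sub_mu; split=> //; first by exists id; split=> // i.
by rewrite lerD2r lez_nat fsubset_leq_card // fsetISS.
Qed.

Section Scaffold.

Variables (r : nat) (n : 'I_r -> nat) (b : 'I_r -> vec).

Definition below_shifted_union (p : pt) : bool :=
  [exists i, has (fun u => lev (toZ p) (Defs.addv (toZ u) (b i))) (Defs.col (n i))].

Lemma order_idealP (p : pt) :
  reflect (order_ideal (shifted_union n b) p) (below_shifted_union p).
Proof.
apply: (iffP existsP) => [[i /hasP[u u_col le_pu]] | [_ [[i [u u_col ->]] le_pu]]].
  by exists (Defs.addv (toZ u) (b i)); split=> //; exists i, u.
by exists i; apply/hasP; exists u.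
Qed.

Variable lam : {fset pt}.
Hypothesis lam_tower : tower lam n b.

Lemma order_ideal_sub (p : pt) : order_ideal (shifted_union n b) p -> p \in lam.
Proof.
case: lam_tower => lam_young _ cols _ _ [_ [[i [u u_col ->]] le_pu]].
have [q q_lam q_shift] := cols i u u_col.
by apply: lam_young q_lam _; rewrite -lev_toZ q_shift.
Qed.

Definition scaffold : {fset pt} := [fset p in lam | below_shifted_union p].

Lemma mem_scaffold (p : pt) : p \in scaffold <-> order_ideal (shifted_union n b) p.
Proof.
rewrite !inE; split=> [/andP[_ /order_idealP] //| ideal_p].
by rewrite order_ideal_sub //=; apply/order_idealP.
Qed.

Lemma scaffold_sub : scaffold `<=` lam.
Proof. by apply/fsubsetP => p; rewrite !inE => /andP[]. Qed.

Lemma scaffold_young : young scaffold.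
Proof.
move=> p q /mem_scaffold[t [union_t le_qt]] le_pq; apply/mem_scaffold.
by exists t; split=> //; apply: lev_trans le_qt; rewrite lev_toZ.
Qed.

Lemma scaffold_tower : tower scaffold n b.
Proof.
apply: tower_subset lam_tower scaffold_young scaffold_sub _ => i v v_col.
case: lam_tower => _ _ cols _ _; have [q _ q_shift] := cols i v v_col.
exists q => //; apply/mem_scaffold; exists (Defs.addv (toZ v) (b i)).
by split; [exists i, v | rewrite -q_shift lev_refl].
Qed.

Lemma scaffolded_scaffold : scaffolded scaffold n b.
Proof. by split; [exact: scaffold_tower | exact: mem_scaffold]. Qed.

End Scaffold.

Theorem lemma3p1 (r : nat) (n : 'I_r -> nat) (b c : 'I_r -> vec) (lam mu : {fset pt}) :
  compatible_tower lam mu n b c ->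
  exists lam' mu' : {fset pt},
    (forall p, p \in lam' <-> order_ideal (shifted_union n b) p) /\
    (forall p, p \in mu' <-> order_ideal (shifted_union n c) p) /\
    compatible_tower lam' mu' n b c /\
    scaffolded_ct lam' mu' n b c /\
    ct_le lam' mu' n b c lam mu n b c.
Proof.
case=> lam_tower mu_tower.
exists (scaffold n b lam), (scaffold n c mu).
split; first exact: mem_scaffold.
split; first exact: mem_scaffold.
split; first by split; exact: scaffold_tower.
split; first by split; exact: scaffolded_scaffold.
by apply: ct_le_subset; exact: scaffold_sub.
Qed.
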